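(* Let $2<p<4$, assume (V), fix $k\in\mathbb{N}$ and $\mathbf{r}_k\in\Lambda_k$. Let $(u_1,\dots,u_{k+1})\in\mathbf{H}_k$ with $u_i\neq0$ and $$\frac{\big(\int_{B_i}|u_i|^p\,dx\big)^{2/p}}{\|u_i\|_i^2}\ \ge\ (2S_p)^{-1}\qquad\text{for } i=1,\dots,k+1.$$ Set $$\widehat b:=\frac{p-2}{4-p}\Big(1+k\,2^{\frac{2}{p-2}}\Big(\frac{2}{4-p}\Big)^{\frac{2}{p-2}}\Big)^{-1}\Big(\frac{4-p}{2}\Big)^{\frac{2}{p-2}}(2S_p)^{-\frac{p}{p-2}},\qquad b_*:=\min\Big\{\frac{p-2}{4-p}\Big(\frac{4-p}{2}\Big)^{\frac{2}{p-2}}(2S_p)^{-\frac{p}{p-2}},\ \widehat b\Big\}.$$ Then for each $b\in(0,b_* )$ there is a unique $(k+1)$-tuple $(t_1,\dots,t_{k+1})\in(0,\infty)^{k+1}$ such that $(t_1u_1,\dots,t_{k+1}u_{k+1})\in N_k^-$.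
   Context: Condition (V): $V$ is continuous, radial, and $\inf_{\mathbb{R}^3}V=V_0>0$. $\mathcal{H}$ is the space of radial $H^1(\mathbb{R}^3)$ functions with finite norm $\|u\|_{\mathcal{H}}^2=\int(|\nabla u|^2+V u^2)dx$, and $S_q:=\inf_{u\in\mathcal{H}\setminus\{0\}}\|u\|_{\mathcal{H}}^2/|u|_q^2$ for $q\in(2,6]$. $\Lambda_k:=\{\mathbf{r}_k=(r_1,\dots,r_k):0=:r_0<r_1<\dots<r_k<r_{k+1}:=\infty\}$; for $\mathbf{r}_k\in\Lambda_k$, $B_i:=\{x\in\mathbb{R}^3:r_{i-1}<|x|<r_i\}$, $i=1,\dots,k+1$. $\mathcal{H}_i:=\{u\in H^1_0(B_i): u \text{ radial},\ u=0 \text{ outside } B_i\}$ with norm $\|u\|_i^2=\int_{B_i}(|\nabla u|^2+V(|x|)u^2)dx$, and $\mathbf{H}_k:=\mathcal{H}_1\times\dots\times\mathcal{H}_{k+1}$. For $b>0$, $E_b(u_1,\dots,u_{k+1}):=\frac12\sum_i\|u_i\|_i^2+\frac b4\big(\sum_i\int_{B_i}|\nabla u_i|^2dx\big)^2-\frac1p\sum_i\int_{B_i}|u_i|^pdx$ (so $E_b(u_1,\dots,u_{k+1})=I_b(\sum_i u_i)$). The set $N_k^-$ consists of all $(u_1,\dots,u_{k+1})\in\mathbf{H}_k$ such that for every $i$: $u_i\neq0$, $\|u_i\|_i^2+b\big(\int_{B_i}|\nabla u_i|^2\big)^2+b\int_{B_i}|\nabla u_i|^2\sum_{j\neq i}\int_{B_j}|\nabla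 u_j|^2=\int_{B_i}|u_i|^p$ (i.e. $\langle\partial_{u_i}E_b,u_i\rangle=0$), and $(4-p)\int_{B_i}|u_i|^pdx<2\|u_i\|_i^2$. *)

From HB Require Import structures.
From mathcomp Require Import all_boot all_order all_algebra.
From mathcomp Require Import all_classical all_reals all_analysis.
Import Order.TTheory GRing.Theory Num.Theory.
Import numFieldNormedType.Exports.
Local Open Scope classical_set_scope.
Local Open Scope ring_scope.



Unset Printing Implicit Defensive.

Section Defs.
Context {R : realType}.

Definition R3 := ((R * R) * R)%type.

Definition leb3 :=
  ((@lebesgue_measure R \x @lebesgue_measure R) \x @lebesgue_measure R)%E.

Definition nrm3 (x : R3) : R := Num.sqrt (x.1.1 ^+ 2 + x.1.2 ^+ 2 + x.2 ^+ 2).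

Definition e3 (j : 'I_3) : R3 :=
  ((if val j == 0%N then 1 else 0), (if val j == 1%N then 1 else 0),
   (if val j == 2%N then 1 else 0)).

Definition iterD (vs : seq R3) (f : R3 -> R) : R3 -> R :=
  foldr (fun v h => 'D_v h) f vs.

Definition test_fun (phi : R3 -> R) : Prop :=
  (forall (vs : seq R3) (x v : R3), derivable (iterD vs phi) x v) /\
  (forall vs : seq R3, continuous (iterD vs phi)) /\
  compact (closure [set x | phi x != 0]).

Definition integrable3 (f : R3 -> R) : Prop :=
  leb3.-integrable setT (fun x => (f x)%:E).

Definition weak_grad (u : R3 -> R) (g : 'I_3 -> R3 -> R) : Prop :=
  forall phi, test_fun phi -> forall j : 'I_3,
    (\int[leb3]_x (u x * 'D_(e3 j) phi x)%:E =
     - \int[leb3]_x (g j x * phi x)%:E)%E.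

Definition gradsq (g : 'I_3 -> R3 -> R) (x : R3) : R := \sum_(j < 3) g j x ^+ 2.

Definition H1 (u : R3 -> R) (g : 'I_3 -> R3 -> R) : Prop :=
  measurable_fun setT u /\ (forall j, measurable_fun setT (g j)) /\
  integrable3 (fun x => u x ^+ 2) /\ (forall j, integrable3 (fun x => g j x ^+ 2)) /\
  weak_grad u g.

Definition radial (f : R3 -> R) : Prop :=
  forall x y, nrm3 x = nrm3 y -> f x = f y.

Definition condV (V : R3 -> R) : Prop :=
  continuous V /\ radial V /\ exists V0, 0 < V0 /\ forall x, V0 <= V x.

(* u = 0 as an element of L^2 (a.e. zero) *)
Definition aezero (u : R3 -> R) : Prop := {ae leb3, forall x, u x = 0}.

Definition Hspace (V : R3 -> R) (u : R3 -> R) (g : 'I_3 -> R3 -> R) : Prop :=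
  H1 u g /\ radial u /\ integrable3 (fun x => V x * u x ^+ 2).

Definition Hnorm2 (V : R3 -> R) (u : R3 -> R) (g : 'I_3 -> R3 -> R) : R :=
  fine (\int[leb3]_x (gradsq g x + V x * u x ^+ 2)%:E).

(* int |u|^q dx, so that |u|_q^2 = (Lint q u)^(2/q) *)
Definition Lint (q : R) (u : R3 -> R) : R :=
  fine (\int[leb3]_x (`|u x| `^ q)%:E).

Definition Sq (V : R3 -> R) (q : R) : R :=
  inf [set s | exists (u : R3 -> R) (g : 'I_3 -> R3 -> R),
    [/\ Hspace V u g, integrable3 (fun x => `|u x| `^ q), ~ aezero u &
        s = Hnorm2 V u g / (Lint q u) `^ (2 / q)]].

(* radii: r_0 = 0, r_1, ..., r_k given by r 1, ..., r k *)
Definition rad (r : nat -> R) (i : nat) : R := if i is 0%N then 0 else r i.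

Definition Lambda (k : nat) (r : nat -> R) : Prop :=
  forall j : nat, (j < k)%N -> rad r j < r j.+1.

(* the shell B_{i+1} = { r_i < |x| < r_{i+1} } (0-based index i, r_{k+1} = oo) *)
Definition shell (k : nat) (r : nat -> R) (i : nat) : set R3 :=
  [set x | rad r i < nrm3 x /\ (i = k \/ nrm3 x < r i.+1)].

Definition Hi (V : R3 -> R) (k : nat) (r : nat -> R) (i : nat)
    (u : R3 -> R) (g : 'I_3 -> R3 -> R) : Prop :=
  Hspace V u g /\ (forall x, ~ shell k r i x -> u x = 0).

Definition normi2 (V : R3 -> R) (k : nat) (r : nat -> R) (i : nat)
    (u : R3 -> R) (g : 'I_3 -> R3 -> R) : R :=
  fine (\int[leb3]_(x in shell k r i) (gradsq g x + V x * u x ^+ 2)%:E).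

Definition gradi2 (k : nat) (r : nat -> R) (i : nat) (g : 'I_3 -> R3 -> R) : R :=
  fine (\int[leb3]_(x in shell k r i) (gradsq g x)%:E).

Definition Lpi (p : R) (k : nat) (r : nat -> R) (i : nat) (u : R3 -> R) : R :=
  fine (\int[leb3]_(x in shell k r i) (`|u x| `^ p)%:E).

Definition Nminus (V : R3 -> R) (k : nat) (r : nat -> R) (p b : R)
    (u : 'I_k.+1 -> R3 -> R) (g : 'I_k.+1 -> 'I_3 -> R3 -> R) : Prop :=
  (forall i : 'I_k.+1, Hi V k r i (u i) (g i)) /\
  forall i : 'I_k.+1,
    [/\ ~ aezero (u i),
        normi2 V k r i (u i) (g i) + b * (gradi2 k r i (g i)) ^+ 2
          + b * gradi2 k r i (g i) * (\sum_(j < k.+1 | j != i) gradi2 k r j (g j))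
          = Lpi p k r i (u i) &
        (4 - p) * Lpi p k r i (u i) < 2 * normi2 V k r i (u i) (g i)].

Definition bhat (p : R) (k : nat) (S : R) : R :=
  (p - 2) / (4 - p)
  * (1 + k%:R * 2 `^ (2 / (p - 2)) * (2 / (4 - p)) `^ (2 / (p - 2)))^-1
  * ((4 - p) / 2) `^ (2 / (p - 2)) * (2 * S) `^ (- (p / (p - 2))).

Definition bstar (p : R) (k : nat) (S : R) : R :=
  Num.min ((p - 2) / (4 - p) * ((4 - p) / 2) `^ (2 / (p - 2))
             * (2 * S) `^ (- (p / (p - 2))))
          (bhat p k S).

End Defs.

From HB Require Import structures.
From mathcomp Require Import all_boot all_order all_algebra.
From mathcomp Require Import all_classical all_reals all_analysis.
From mathcomp Require Import ring lra.
Import Order.TTheory GRing.Theory Num.Theory.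
Import numFieldNormedType.Exports.
Local Open Scope classical_set_scope.
Local Open Scope ring_scope.

(* Scaling u_i by t_i > 0 multiplies ||u_i||_i^2 and int_{B_i} |grad u_i|^2 by t_i^2
   and int_{B_i} |u_i|^p by t_i^p.  Dividing the i-th constraint by t_i^2 shows that
   (t_i u_i) lies on N_k^- iff, for X := sum_j t_j^2 int_{B_j} |grad u_j|^2,
   t_i^(p-2) = y_i(X) := (||u_i||^2 + b X int_{B_i} |grad u_i|^2) / int_{B_i} |u_i|^p
   and y_i(X) < Y_i := 2 ||u_i||^2 / ((4-p) int_{B_i} |u_i|^p).  So the problem
   reduces to the scalar equation X = F(X) := sum_j y_j(X)^(2/(p-2)) int_{B_j} |grad u_j|^2.
   The bound on the quotients and b < b_* give F(X_s) < X_s at the point X_s up to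
   which y_i <= Y_i is guaranteed, so a fixed point exists by the intermediate value
   theorem; where y_i <= Y_i the mean value theorem bounds the slope of F by a
   constant < 1, so the fixed point is unique. *)

Section integral_scale.
Local Open Scope ereal_scope.
Context d (T : measurableType d) (R : realType) (mu : {measure set T -> \bar R}).
Import HBNNSimple.

Lemma ereal_sup_sintegralZl (f : T -> \bar R) (k : R) : (0 < k)%R ->
  ereal_sup [set sintegral mu (h : {nnsfun T >-> R}) |
    h in [set h : {nnsfun T >-> R} | forall x, (h x)%:E <= k%:E * f x]]
  = k%:E * ereal_sup [set sintegral mu (h : {nnsfun T >-> R}) |
    h in [set h : {nnsfun T >-> R} | forall x, (h x)%:E <= f x]].
Proof.
move=> k_gt0; rewrite -ereal_sup_pZl //; congr ereal_sup; apply/seteqP; split.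
- move=> _ [h hle <-].
  have kV_ge0 : (0 <= k^-1)%R by rewrite invr_ge0 ltW.
  exists (sintegral mu (scale_nnsfun h kV_ge0)).
    exists (scale_nnsfun h kV_ge0) => // x /=.
    rewrite EFinM -(@lee_pmul2l _ k%:E) ?lte_fin// muleA -EFinM mulfV ?gt_eqF//.
    by rewrite mul1r; exact: hle.
  rewrite -(sintegralrM mu k); apply: eq_sintegral => x /=.
  by rewrite mulrA mulfV ?gt_eqF// mul1r.
- move=> _ [_ [h hle <-] <-].
  exists (scale_nnsfun h (ltW k_gt0)); last first.
    by rewrite -(sintegralrM mu k); apply: eq_sintegral.
  by move=> x /=; rewrite EFinM lee_pmul2l ?lte_fin//; exact: hle.
Qed.

Lemma gt0_muleBr (k : R) (x y : \bar R) : (0 < k)%R ->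
  k%:E * (x - y) = k%:E * x - k%:E * y.
Proof.
move=> k_gt0; have k0 : 0 < k%:E by rewrite lte_fin.
case: x => [x| |]; case: y => [y| |] //=;
  rewrite ?gt0_muley ?gt0_muleNy //=.
by rewrite -EFinD -EFinM -EFinD mulrDr mulrN.
Qed.

(* Unlike [ge0_integralZl], no measurability is needed for a positive constant:
   positive scaling commutes with both suprema in the definition of the integral. *)
Lemma gt0_integralZl (D : set T) (f : T -> \bar R) (k : R) : (0 < k)%R ->
  \int[mu]_(x in D) (k%:E * f x) = k%:E * \int[mu]_(x in D) f x.
Proof.
move=> k_gt0; rewrite /integral /= erestrict_scale ge0_funeposM ?ltW// ge0_funenegM ?ltW//.
by rewrite !ereal_sup_sintegralZl// gt0_muleBr.
Qed.

Lemma ge0_le_integral_nonmeasurable (D : set T) (f g : T -> \bar R) :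
  (forall x, D x -> 0 <= f x <= g x) ->
  \int[mu]_(x in D) f x <= \int[mu]_(x in D) g x.
Proof.
move=> fg; rewrite /integral /=.
have -> : (f \_ D)^\- = (g \_ D)^\-.
  apply/funext => x; rewrite !funenegE /patch; case: ifPn => // /set_mem Dx.
  have /andP[f_ge0 fg_x] := fg x Dx.
  by rewrite !max_r// leeNl oppe0 ?(le_trans f_ge0 fg_x).
apply: leeB => //; apply: ereal_sup_le => _ [h hle <-]; exists h => // x.
apply: (le_trans (hle x)); rewrite !funeposE /patch; case: ifPn => // /set_mem Dx.
have /andP[f_ge0 fg_x] := fg x Dx.
by rewrite !max_l ?(le_trans f_ge0 fg_x).
Qed.

End integral_scale.

Lemma fine_EFinM {R : realType} (k : R) (e : \bar R) : fine (k%:E * e)%E = k * fine e.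
Proof.
case: e => [e| |]; rewrite /= ?mulr0 //.
  by rewrite mulry; case: sgrP => _; rewrite ?mul0e ?mul1e ?mulN1e.
by rewrite mulrNy; case: sgrP => _; rewrite ?mul0e ?mul1e ?mulN1e.
Qed.

Section functionals.
Context {R : realType}.
Implicit Types (V u : @R3 R -> R) (g : 'I_3 -> @R3 R -> R).

Lemma gradsqZ (t : R) g x :
  gradsq (fun j x => t * g j x) x = t ^+ 2 * gradsq g x.
Proof. by rewrite /gradsq mulr_sumr; apply: eq_bigr => j _; rewrite exprMn. Qed.

Lemma gradsq_ge0 g x : 0 <= gradsq g x.
Proof. by apply: sumr_ge0 => j _; exact: sqr_ge0. Qed.

Lemma normi2Z V k r i u g (t : R) : 0 < t ->
  normi2 V k r i (fun x => t * u x) (fun j x => t * g j x) = t ^+ 2 * normi2 V k r i u g.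
Proof.
move=> t_gt0; rewrite /normi2 -fine_EFinM -gt0_integralZl ?exprn_gt0//.
by congr fine; apply: eq_integral => x _; rewrite gradsqZ exprMn mulrCA -mulrDr EFinM.
Qed.

Lemma gradi2Z k r i g (t : R) : 0 < t ->
  gradi2 k r i (fun j x => t * g j x) = t ^+ 2 * gradi2 k r i g.
Proof.
move=> t_gt0; rewrite /gradi2 -fine_EFinM -gt0_integralZl ?exprn_gt0//.
by congr fine; apply: eq_integral => x _; rewrite gradsqZ EFinM.
Qed.

Lemma LpiZ (p : R) k r i u (t : R) : 0 < t ->
  Lpi p k r i (fun x => t * u x) = t `^ p * Lpi p k r i u.
Proof.
move=> t_gt0; rewrite /Lpi -fine_EFinM -gt0_integralZl ?powR_gt0//.
congr fine; apply: eq_integral => x _.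
by rewrite normrM (gtr0_norm t_gt0) powRM ?EFinM // ltW.
Qed.

Lemma normi2_ge0 V k r i u g : (forall x, 0 <= V x) -> 0 <= normi2 V k r i u g.
Proof.
move=> V_ge0; apply/fine_ge0/integral_ge0 => x _.
by rewrite lee_fin addr_ge0 ?gradsq_ge0 // mulr_ge0 // sqr_ge0.
Qed.

Lemma gradi2_ge0 k r i g : 0 <= gradi2 k r i g.
Proof. by apply/fine_ge0/integral_ge0 => x _; rewrite lee_fin gradsq_ge0. Qed.

Lemma Lpi_ge0 (p : R) k r i u : 0 <= Lpi p k r i u.
Proof. by apply/fine_ge0/integral_ge0 => x _; rewrite lee_fin powR_ge0. Qed.

Lemma gradi2_le_normi2 V k r i u g : (forall x, 0 <= V x) ->
  0 < normi2 V k r i u g -> gradi2 k r i g <= normi2 V k r i u g.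
Proof.
rewrite /normi2 /gradi2 => V_ge0.
set I := (\int[_]_(_ in _) _)%E; set J := (\int[_]_(_ in _) _)%E.
have J_ge0 : (0 <= J)%E by apply: integral_ge0 => x _; rewrite lee_fin gradsq_ge0.
have JI : (J <= I)%E.
  apply: ge0_le_integral_nonmeasurable => x _.
  by rewrite !lee_fin gradsq_ge0 lerDl mulr_ge0 // sqr_ge0.
case: I JI => [I| |] JI; rewrite /= ?ltxx // => _.
by case: J J_ge0 JI => [J| |] //= _; rewrite ?lee_fin ?leye_eq.
Qed.

Lemma Sq_ge0 V (q : R) : (forall x, 0 <= V x) -> 0 <= Sq V q.
Proof.
move=> V_ge0; rewrite /Sq.
set E := [set _ | _].
have [[s Es]|/forallNP E0] := pselect (exists s, E s); last first.
  by rewrite (_ : E = set0) ?inf0 //; apply/seteqP; split => // x /E0.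
apply: lb_le_inf; first by exists s.
move=> _ [u [g [_ _ _ ->]]]; apply: divr_ge0; last exact: powR_ge0.
apply/fine_ge0/integral_ge0 => x _.
by rewrite lee_fin addr_ge0 ?gradsq_ge0 // mulr_ge0 // sqr_ge0.
Qed.

Lemma integrable3Zl (f : @R3 R -> R) (c : R) :
  integrable3 f -> integrable3 (fun x => c * f x).
Proof.
by move=> f_int; rewrite /integrable3; under eq_fun do rewrite EFinM; exact: integrableZl.
Qed.

Lemma weak_gradZ u g (t : R) : 0 < t -> weak_grad u g ->
  weak_grad (fun x => t * u x) (fun j x => t * g j x).
Proof.
move=> t_gt0 ug phi phi_test j.
under eq_integral => x _ do rewrite -mulrA EFinM.
under [X in _ = (- X)%E]eq_integral => x _ do rewrite -mulrA EFinM.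
by rewrite !gt0_integralZl // ug // muleN.
Qed.

Lemma HiZ V k r i u g (t : R) : 0 < t -> Hi V k r i u g ->
  Hi V k r i (fun x => t * u x) (fun j x => t * g j x).
Proof.
move=> t_gt0 [[[mu [mg [iu [ig wg]]]] [ru iV]] supp].
have sqrZ (f : @R3 R -> R) : (fun x => (t * f x) ^+ 2) = (fun x => t ^+ 2 * f x ^+ 2).
  by apply/funext => x; rewrite exprMn.
split; last by move=> x /supp ->; rewrite mulr0.
split; last split.
- split; first exact: measurable_realfun.measurable_funM (measurable_cst t) mu.
  split; first by move=> j; exact: measurable_realfun.measurable_funM (measurable_cst t) (mg j).
  rewrite sqrZ; split; first exact: integrable3Zl.
  split; last exact: weak_gradZ.
  by move=> j; rewrite (sqrZ (g j)); exact: integrable3Zl.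
- by move=> x y /ru ->.
- rewrite (_ : (fun x => _) = (fun x => t ^+ 2 * (V x * u x ^+ 2))).
    exact: integrable3Zl.
  by apply/funext => x; rewrite exprMn mulrCA.
Qed.

Lemma aezeroZ u (t : R) : t != 0 -> ~ aezero u -> ~ aezero (fun x => t * u x).
Proof.
move=> t_neq0 u_neq0 [N [mN N0 sub]]; apply: u_neq0; exists N; split => // x /= Nx.
by apply: sub => /= /eqP; rewrite mulf_eq0 (negbTE t_neq0) => /eqP.
Qed.

End functionals.

Section powR_facts.
Context {R : realType}.

Lemma powR_sub2 (s q : R) : 0 < s -> s `^ q = s ^+ 2 * s `^ (q - 2).
Proof.
move=> s_gt0; have s2 : s `^ 2 = s ^+ 2 := powR_mulrn 2 (ltW s_gt0).
rewrite -[in LHS](subrK 2 q) [in LHS]powRD; last by rewrite (gt_eqF s_gt0) implybT.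
by rewrite s2 mulrC.
Qed.

Lemma powR_powR_div2 (s q : R) : 0 <= s -> q != 0 -> (s `^ q) `^ (2 / q) = s ^+ 2.
Proof.
by move=> s_ge0 q_neq0; rewrite -powRrM mulrCA mulfV // mulr1; exact: (powR_mulrn 2).
Qed.

Lemma powR_increment_le {y1 y2 m : R} : 0 < y1 -> y1 <= y2 -> 1 <= m ->
  y2 `^ m - y1 `^ m <= m * y2 `^ (m - 1) * (y2 - y1).
Proof.
move=> y1_gt0 y12 m_ge1.
have der (x : R) : y1 <= x -> is_derive x 1 (fun z : R => z `^ m) (m * x `^ (m - 1)).
  by move=> x1; apply: is_derive1_powR; exact: lt_le_trans x1.
have der_in x : x \in `]y1, y2[ -> is_derive x 1 (fun z : R => z `^ m) (m * x `^ (m - 1)).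
  by rewrite in_itv /= => /andP[/ltW x1 _]; exact: der.
have cont : {within `[y1, y2], continuous (fun z : R => z `^ m)}.
  apply: derivable_within_continuous => x; rewrite in_itv /= => /andP[x1 _].
  exact: (@ex_derive _ _ _ _ _ _ _ (der x x1)).
have [z] := MVT_segment y12 der_in cont.
rewrite in_itv /= => /andP[z1 z2] ->.
rewrite ler_wpM2r ?subr_ge0 // ler_wpM2l ?(le_trans ler01 m_ge1) //.
by apply: ge0_ler_powR; rewrite ?nnegrE ?subr_ge0 //; apply: ltW;
  apply: lt_le_trans y1_gt0 _.
Qed.

End powR_facts.

Definition nehari_system {R : realType} {n : nat} (a c d : 'I_n -> R) (p b : R)
    (t : 'I_n -> R) : Prop :=
  forall i, t i ^+ 2 * a i + b * (t i ^+ 2 * c i) * (\sum_j t j ^+ 2 * c j)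
              = t i `^ p * d i /\
            (4 - p) * (t i `^ p * d i) < 2 * (t i ^+ 2 * a i).

Section nehari_system.
Context {R : realType}.
Variables (n : nat) (a c d : 'I_n -> R) (p b P : R).
Hypotheses (p_gt2 : 2 < p) (p_lt4 : p < 4) (b_gt0 : 0 < b).
Hypotheses (a_gt0 : forall i, 0 < a i) (d_gt0 : forall i, 0 < d i).
Hypotheses (c_ge0 : forall i, 0 <= c i) (c_le_a : forall i, c i <= a i).

Let m := 2 / (p - 2).
Let Q := (2 / (4 - p)) `^ m.
Let y j X := (a j + b * c j * X) / d j.
Let Y j := 2 * a j / ((4 - p) * d j).
Let F X := \sum_j c j * y j X `^ m.
(* The largest X for which c_j <= a_j guarantees y_j(X) <= Y_j. *)
Let Xs := (p - 2) / ((4 - p) * b).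

Hypothesis a_ratio_le : forall i, a i * (a i / d i) `^ m <= P.
Hypothesis b_small : b * n%:R * (Q * P) < (p - 2) / (4 - p).

Let p2_gt0 : 0 < p - 2. Proof. by rewrite subr_gt0. Qed.
Let p4_gt0 : 0 < 4 - p. Proof. by rewrite subr_gt0. Qed.
Let m_ge1 : 1 <= m.
Proof. by rewrite /m ler_pdivlMr // mul1r lerBlDr -natrD ltW. Qed.
Let m_ge0 : 0 <= m. Proof. exact: le_trans ler01 m_ge1. Qed.
Let Xs_gt0 : 0 < Xs. Proof. by rewrite /Xs divr_gt0 // mulr_gt0. Qed.

Let y_gt0 j X : 0 <= X -> 0 < y j X.
Proof.
move=> X_ge0; rewrite divr_gt0 // ltr_pwDl //.
by rewrite !mulr_ge0 // ltW.
Qed.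

Let Y_gt0 j : 0 < Y j. Proof. by rewrite divr_gt0 ?mulr_gt0. Qed.

Let Y_eq j : Y j = (a j + b * a j * Xs) / d j.
Proof. by rewrite /Y /Xs; field; rewrite !gt_eqF. Qed.

Let y_le_ay j X : 0 <= X -> y j X <= (a j + b * a j * X) / d j.
Proof.
move=> X_ge0; rewrite ler_pM2r ?invr_gt0 // lerD2l.
by rewrite ler_wpM2r // ler_wpM2l // ltW.
Qed.

Let y_le_Y j X : 0 <= X <= Xs -> y j X <= Y j.
Proof.
move=> /andP[X_ge0 XXs]; apply: le_trans (y_le_ay j X X_ge0) _.
by rewrite Y_eq ler_pM2r ?invr_gt0 // lerD2l ler_wpM2l // mulr_ge0 // ltW.
Qed.

Let y_lt_Y j X : 0 <= X < Xs -> y j X < Y j.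
Proof.
move=> /andP[X_ge0 XXs]; apply: le_lt_trans (y_le_ay j X X_ge0) _.
by rewrite Y_eq ltr_pM2r ?invr_gt0 // ltrD2l ltr_pM2l // mulr_gt0.
Qed.

Let a_mul_powR_Y_le j : a j * Y j `^ m <= Q * P.
Proof.
have ad_ge0 : 0 <= a j / d j by rewrite divr_ge0 // ltW.
have q_ge0 : 0 <= 2 / (4 - p) by rewrite divr_ge0 // ltW.
rewrite (_ : Y j = 2 / (4 - p) * (a j / d j)); last by rewrite /Y; field; rewrite !gt_eqF.
by rewrite powRM // mulrCA /Q ler_pM2l ?powR_gt0 ?divr_gt0.
Qed.

Let c_mul_powR_le j z : 0 < z -> z <= Y j -> c j * z `^ m <= Q * P.
Proof.
move=> z_gt0 zY; apply: le_trans (a_mul_powR_Y_le j).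
apply: ler_pM; rewrite ?powR_ge0 //.
by apply: ge0_ler_powR; rewrite // nnegrE ltW ?Y_gt0.
Qed.

Let sqr_c_mul_powR_le j z : 0 < z -> z <= Y j ->
  c j ^+ 2 * z `^ (m - 1) / d j <= (4 - p) / 2 * (Q * P).
Proof.
move=> z_gt0 zY.
apply: le_trans (_ : a j ^+ 2 * Y j `^ (m - 1) / d j <= _).
  rewrite ler_pM2r ?invr_gt0 //; apply: ler_pM; rewrite ?sqr_ge0 ?powR_ge0 //.
    by rewrite ler_sqr ?nnegrE ?c_ge0 ?c_le_a ?(ltW (a_gt0 j)).
  by apply: ge0_ler_powR; rewrite ?subr_ge0 // nnegrE ltW ?Y_gt0.
have -> : a j ^+ 2 * Y j `^ (m - 1) / d j = (4 - p) / 2 * (a j * Y j `^ m).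
  rewrite -[in RHS](subrK 1 m) [in RHS]powRD; last by rewrite (gt_eqF (Y_gt0 j)) implybT.
  by rewrite powRr1 ?(ltW (Y_gt0 j)) // /Y; field; rewrite !gt_eqF.
by rewrite ler_pM2l ?divr_gt0.
Qed.

Let F_continuous : {within `[0, Xs], continuous (fun X => F X - X)}.
Proof.
pose aff j : R -> R := cst (a j / d j) + (b * c j / d j) \*: id.
have -> : (fun X => F X - X) =
    \sum_j (c j \*: ((fun z : R => z `^ m) \o aff j)) - id.
  apply/funext => X; rewrite fct_sumE; congr (_ - _); apply: eq_bigr => j _.
  congr (_ * _ `^ _).
  change ((a j + b * c j * X) / d j = a j / d j + b * c j / d j * X).
  by field; rewrite gt_eqF.
apply: derivable_within_continuous => X; rewrite in_itv /= => /andP[X_ge0 _].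
have aff_gt0 j : 0 < aff j X.
  change (0 < a j / d j + b * c j / d j * X).
  rewrite ltr_pwDl ?divr_gt0 // mulr_ge0 //.
  by rewrite divr_ge0 ?mulr_ge0 ?(ltW b_gt0) ?(ltW (d_gt0 j)).
apply: ex_derive; apply: is_deriveB; apply: is_derive_sum => j.
apply: is_deriveZ; apply: is_derive1_comp.
exact: is_derive1_powR (aff_gt0 j).
Qed.

Let F_Xs_lt : F Xs < Xs.
Proof.
have Xs_range : 0 <= Xs <= Xs by rewrite lexx ltW.
apply: le_lt_trans (_ : F Xs <= n%:R * (Q * P)) _.
  have -> : n%:R * (Q * P) = \sum_(j < n) (Q * P).
    by rewrite sumr_const card_ord mulr_natl.
  apply: ler_sum => j _.
  exact: c_mul_powR_le (y_gt0 j Xs (ltW Xs_gt0)) (y_le_Y j Xs Xs_range).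
have -> : Xs = (p - 2) / (4 - p) / b by rewrite /Xs invfM mulrA.
by rewrite ltr_pdivlMr // mulrC (mulrA b).
Qed.

Let fixed_point_exists : exists2 X, 0 <= X < Xs & F X = X.
Proof.
have F0_ge0 : 0 <= F 0 - 0.
  by rewrite subr0; apply: sumr_ge0 => j _; rewrite mulr_ge0 ?powR_ge0.
have sign_change : Num.min (F 0 - 0) (F Xs - Xs) <= 0 <= Num.max (F 0 - 0) (F Xs - Xs).
  have FXs_le0 : F Xs - Xs <= 0 by rewrite subr_le0 ltW.
  by rewrite ge_min le_max F0_ge0 FXs_le0 orbT.
have [X] := IVT (ltW Xs_gt0) F_continuous sign_change.
rewrite in_itv /= => /andP[X_ge0 XXs] /eqP; rewrite subr_eq0 => /eqP FX.
exists X => //; rewrite X_ge0 lt_neqAle XXs andbT.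
by apply: contraTneq F_Xs_lt => <-; rewrite FX ltxx.
Qed.

Let L := m * b * ((4 - p) / 2 * (Q * P)).

Let slope_lt1 : n%:R * L < 1.
Proof.
have -> : n%:R * L = b * n%:R * (Q * P) / ((p - 2) / (4 - p)).
  by rewrite /L /m; field; rewrite !gt_eqF.
by rewrite ltr_pdivrMr ?divr_gt0 // mul1r.
Qed.

Let F_increment_le X1 X2 : 0 <= X1 <= X2 -> (forall j, y j X2 <= Y j) ->
  F X2 - F X1 <= n%:R * L * (X2 - X1).
Proof.
move=> /andP[X1_ge0 X12] yY.
have -> : n%:R * L * (X2 - X1) = \sum_(j < n) (L * (X2 - X1)).
  by rewrite sumr_const card_ord -mulrA mulr_natl.
rewrite /F -sumrB; apply: ler_sum => j _; rewrite -mulrBr.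
have y1_gt0 := y_gt0 j X1 X1_ge0.
have y12 : y j X1 <= y j X2.
  by rewrite ler_pM2r ?invr_gt0 // lerD2l ler_wpM2l // mulr_ge0 // ltW.
apply: le_trans (ler_wpM2l (c_ge0 j) (powR_increment_le y1_gt0 y12 m_ge1)) _.
have -> : c j * (m * y j X2 `^ (m - 1) * (y j X2 - y j X1)) =
    m * b * (c j ^+ 2 * y j X2 `^ (m - 1) / d j) * (X2 - X1).
  by rewrite /y; field; rewrite gt_eqF.
rewrite ler_wpM2r ?subr_ge0 // ler_wpM2l ?(mulr_ge0 m_ge0 (ltW b_gt0)) //.
exact: sqr_c_mul_powR_le j _ (lt_le_trans y1_gt0 y12) (yY j).
Qed.

Let fixed_point_unique X1 X2 : 0 <= X1 <= X2 -> (forall j, y j X2 <= Y j) ->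
  F X1 = X1 -> F X2 = X2 -> X1 = X2.
Proof.
move=> X12 yY FX1 FX2; apply/eqP; rewrite eq_le (andP X12).2 /= leNgt.
apply/negP => X12_lt; have := F_increment_le X1 X2 X12 yY.
rewrite FX1 FX2 -[X in X <= _ -> _]mul1r ler_pM2r ?subr_gt0 // leNgt.
by rewrite slope_lt1.
Qed.

Let nehari_at_iff i (s X : R) : 0 < s ->
  (s ^+ 2 * a i + b * (s ^+ 2 * c i) * X = s `^ p * d i /\
   (4 - p) * (s `^ p * d i) < 2 * (s ^+ 2 * a i)) <->
  (s `^ (p - 2) = y i X /\ y i X < Y i).
Proof.
move=> s_gt0; rewrite powR_sub2 //.
have s2_gt0 : 0 < s ^+ 2 by rewrite exprn_gt0.
have eqE : s ^+ 2 * a i + b * (s ^+ 2 * c i) * X = s ^+ 2 * s `^ (p - 2) * d i <->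
    s `^ (p - 2) = y i X.
  split=> [e|->]; last by rewrite /y; field; rewrite gt_eqF.
  have e' : a i + b * c i * X = s `^ (p - 2) * d i.
    by apply: (mulfI (lt0r_neq0 s2_gt0)); rewrite mulrA -e; ring.
  by rewrite /y e' mulfK ?gt_eqF.
have ltE : ((4 - p) * (s ^+ 2 * s `^ (p - 2) * d i) < 2 * (s ^+ 2 * a i)) =
    ((4 - p) * (s `^ (p - 2) * d i) < 2 * a i).
  have -> : (4 - p) * (s ^+ 2 * s `^ (p - 2) * d i) =
    s ^+ 2 * ((4 - p) * (s `^ (p - 2) * d i)) by ring.
  by rewrite [2 * _]mulrCA ltr_pM2l.
have YE : (y i X < Y i) = ((4 - p) * (y i X * d i) < 2 * a i).
  by rewrite /Y ltr_pdivlMr ?mulr_gt0 // mulrCA.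
rewrite ltE YE; split=> -[e ineq].
- by rewrite -(proj1 eqE e).
- by split; [exact/eqE | rewrite e].
Qed.

Let nehari_fixed_point t X : (forall i, 0 < t i) -> nehari_system a c d p b t ->
  X = \sum_j t j ^+ 2 * c j ->
  [/\ forall i, t i `^ (p - 2) = y i X, forall i, y i X < Y i & F X = X].
Proof.
move=> t_gt0 t_sol X_eq.
have sol i : t i `^ (p - 2) = y i X /\ y i X < Y i.
  by apply/(nehari_at_iff i (t i) X (t_gt0 i)); rewrite X_eq; exact: t_sol.
split=> [i|i|]; [exact: (sol i).1 | exact: (sol i).2 |].
rewrite /F /m [RHS]X_eq; apply: eq_bigr => j _.
by rewrite -(sol j).1 powR_powR_div2 ?(ltW (t_gt0 j)) ?(lt0r_neq0 p2_gt0) // mulrC.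
Qed.

Lemma nehari_system_exists_unique :
  exists! t : 'I_n -> R, (forall i, 0 < t i) /\ nehari_system a c d p b t.
Proof.
have [X X_range FX] := fixed_point_exists; have X_ge0 := (andP X_range).1.
pose t i := y i X `^ (p - 2)^-1.
have t_gt0 i : 0 < t i by exact: powR_gt0 (y_gt0 i X X_ge0).
have t_pow i : t i `^ (p - 2) = y i X.
  rewrite -powRrM (mulVf (lt0r_neq0 p2_gt0)).
  exact: powRr1 (ltW (y_gt0 i X X_ge0)).
have X_eq : X = \sum_j t j ^+ 2 * c j.
  rewrite -[LHS]FX /F /m; apply: eq_bigr => j _.
  by rewrite -t_pow powR_powR_div2 ?(ltW (t_gt0 j)) ?(lt0r_neq0 p2_gt0) // mulrC.
exists t; split.
  split=> // i; apply/nehari_at_iff => //; rewrite -X_eq t_pow.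
  by split=> //; exact: y_lt_Y.
move=> t' [t'_gt0 t'_sol].
have [t'_pow y'_lt_Y FX'] := nehari_fixed_point t' _ t'_gt0 t'_sol erefl.
set X' := \sum_j _ in t'_pow y'_lt_Y FX'.
have X'_ge0 : 0 <= X' by apply: sumr_ge0 => j _; rewrite mulr_ge0 ?sqr_ge0.
have XX' : X = X'.
  have [le|/ltW le] := leP X X'.
    apply: fixed_point_unique => //; first by rewrite X_ge0 le.
    by move=> j; exact/ltW/y'_lt_Y.
  apply/esym/fixed_point_unique => //; first by rewrite X'_ge0 le.
  by move=> j; apply: y_le_Y; rewrite X_ge0 (ltW (andP X_range).2).
apply/funext => i; apply: (powR_injective p2_gt0).
- by rewrite nnegrE ltW.
- by rewrite nnegrE ltW.
- by rewrite /= t_pow t'_pow XX'.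
Qed.

End nehari_system.

Arguments nehari_system_exists_unique {R n a c d p b P}.

Section constants.
Context {R : realType}.

Lemma powRV (x q : R) : 0 < x -> (x^-1) `^ q = (x `^ q)^-1.
Proof.
move=> x_gt0; have xq_neq0 : x `^ q != 0 by rewrite gt_eqF ?powR_gt0.
apply: (mulIf xq_neq0); rewrite -powRM ?invr_ge0 ?(ltW x_gt0) //.
by rewrite (mulVf (lt0r_neq0 x_gt0)) powR1 mulVf.
Qed.

Lemma quotient_gt0 {s a d q : R} : 0 < s -> 0 <= a -> 0 <= d -> q != 0 ->
  s <= d `^ q / a -> 0 < a /\ 0 < d.
Proof.
move=> s_gt0 a_ge0 d_ge0 q_neq0 s_le.
split; rewrite lt_def ?a_ge0 ?d_ge0 andbT; apply: contraTneq s_le => ->; rewrite -ltNge.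
- by rewrite invr0 mulr0.
- by rewrite powR0 // mul0r.
Qed.

(* The exponents of d cancel: 2/p + (2/p - 1) * 2/(p-2) = 0. *)
Lemma mul_powR_ratio_le {a d S p : R} : 2 < p -> 0 < a -> 0 < d -> 0 < S ->
  (2 * S)^-1 <= d `^ (2 / p) / a ->
  a * (a / d) `^ (2 / (p - 2)) <= (2 * S) `^ (2 / (p - 2) + 1).
Proof.
move=> p_gt2 a_gt0 d_gt0 S_gt0 ratio.
have p_gt0 : 0 < p by apply: lt_trans p_gt2.
have p2_gt0 : 0 < p - 2 by rewrite subr_gt0.
have S2_gt0 : 0 < 2 * S by rewrite mulr_gt0.
set m := 2 / (p - 2).
have m_ge0 : 0 <= m by rewrite divr_ge0 // ltW.
set A := d `^ (2 / p) * (2 * S).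
have A_gt0 : 0 < A by rewrite mulr_gt0 ?powR_gt0.
have a_le_A : a <= A.
  by rewrite -ler_pdivrMr // mulrC -ler_pdivlMr.
apply: (@le_trans _ _ (A * (A / d) `^ m)).
  apply: ler_pM; rewrite ?powR_ge0 ?(ltW a_gt0) //.
  apply: ge0_ler_powR; rewrite // ?nnegrE ?divr_ge0 ?(ltW a_gt0) ?(ltW A_gt0) ?(ltW d_gt0) //.
  by rewrite ler_pM2r ?invr_gt0.
have -> : A / d = (2 * S) * d `^ (2 / p - 1).
  rewrite powRB; last by rewrite (lt0r_neq0 d_gt0) implybT.
  by rewrite powRr1 ?(ltW d_gt0) // /A; ring.
rewrite powRM ?(ltW S2_gt0) ?powR_ge0 // -powRrM /A.
have -> : d `^ (2 / p) * (2 * S) * ((2 * S) `^ m * d `^ ((2 / p - 1) * m)) =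
    (d `^ (2 / p) * d `^ ((2 / p - 1) * m)) * ((2 * S) `^ m * (2 * S)) by ring.
rewrite -powRD; last by rewrite (lt0r_neq0 d_gt0) implybT.
have -> : 2 / p + (2 / p - 1) * m = 0 by rewrite /m; field; rewrite !gt_eqF.
rewrite powRr0 mul1r -[X in _ * X <= _](powRr1 (ltW S2_gt0)) -powRD //.
by rewrite (lt0r_neq0 S2_gt0) implybT.
Qed.

Lemma bstar0_le0 {p : R} k : 2 < p -> bstar p k 0 <= 0.
Proof.
move=> p_gt2; have p2_gt0 : 0 < p - 2 by rewrite subr_gt0.
have e_neq0 : - (p / (p - 2)) != 0.
  by rewrite oppr_eq0 gt_eqF // divr_gt0 // (lt_trans _ p_gt2).
by rewrite /bstar ge_min mulr0 powR0 // mulr0 lexx.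
Qed.

Lemma bhat_bound {p S b : R} k : 2 < p < 4 -> 0 < S -> 0 < b -> b < bhat p k S ->
  b * k.+1%:R * ((2 / (4 - p)) `^ (2 / (p - 2)) * (2 * S) `^ (2 / (p - 2) + 1))
  < (p - 2) / (4 - p).
Proof.
move=> /andP[p_gt2 p_lt4] S_gt0 b_gt0 b_lt.
have p2_gt0 : 0 < p - 2 by rewrite subr_gt0.
have p4_gt0 : 0 < 4 - p by rewrite subr_gt0.
set m := 2 / (p - 2); set Q := (2 / (4 - p)) `^ m.
set T := 2 `^ m; set P := (2 * S) `^ (m + 1).
have m_ge0 : 0 <= m by rewrite divr_ge0 // ltW.
have Q_ge1 : 1 <= Q.
  have q_ge1 : 1 <= 2 / (4 - p) by rewrite ler_pdivlMr // mul1r; lra.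
  by have := ler_powR q_ge1 m_ge0; rewrite powRr0.
have T_ge1 : 1 <= T by have := ler_powR (ler1n R 2) m_ge0; rewrite powRr0.
have P_gt0 : 0 < P by rewrite powR_gt0 // mulr_gt0.
have Q_gt0 : 0 < Q := lt_le_trans ltr01 Q_ge1.
set D := 1 + k%:R * T * Q.
have D_ge : k.+1%:R <= D.
  rewrite /D -addn1 natrD addrC lerD2l -mulrA ler_peMr //.
  by rewrite mulr_ege1.
have D_gt0 : 0 < D by apply: lt_le_trans D_ge; rewrite ltr0n.
have bhatE : bhat p k S = (p - 2) / (4 - p) / (D * Q * P).
  rewrite /bhat -/m -[(4 - p) / 2]invf_div powRV ?divr_gt0 // powRN.
  have -> : p / (p - 2) = m + 1 by rewrite /m; field; rewrite gt_eqF.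
  by rewrite -/P -/T -/Q -/D !invfM; ring.
apply: le_lt_trans (_ : b * (D * Q * P) < _); last first.
  by rewrite -ltr_pdivlMr ?mulr_gt0 // -bhatE.
by rewrite -mulrA ler_wpM2l ?(ltW b_gt0) // -mulrA ler_wpM2r ?mulr_ge0 ?(ltW Q_gt0) ?(ltW P_gt0).
Qed.

End constants.

Section scaled_constraints.
Context {R : realType}.

Lemma Nminus_scaled_iff V k r (p b : R) u g (t : 'I_k.+1 -> R) :
  (forall i, 0 < t i) -> (forall i : 'I_k.+1, Hi V k r i (u i) (g i)) ->
  (forall i : 'I_k.+1, ~ aezero (u i)) ->
  Nminus V k r p b (fun i x => t i * u i x) (fun i j x => t i * g i j x) <->
  nehari_system (fun i : 'I_k.+1 => normi2 V k r i (u i) (g i))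
    (fun i : 'I_k.+1 => gradi2 k r i (g i)) (fun i : 'I_k.+1 => Lpi p k r i (u i)) p b t.
Proof.
move=> t_gt0 uH unz; rewrite /Nminus /nehari_system /=.
have constraintE (i : 'I_k.+1) :
    normi2 V k r i (fun x => t i * u i x) (fun j x => t i * g i j x)
    + b * gradi2 k r i (fun j x => t i * g i j x) ^+ 2
    + b * gradi2 k r i (fun j x => t i * g i j x)
      * (\sum_(j < k.+1 | j != i) gradi2 k r j (fun l x => t j * g j l x))
  = t i ^+ 2 * normi2 V k r i (u i) (g i)
    + b * (t i ^+ 2 * gradi2 k r i (g i)) * (\sum_j t j ^+ 2 * gradi2 k r j (g j)).
  rewrite normi2Z // gradi2Z // (eq_bigr (fun j => t j ^+ 2 * gradi2 k r j (g j))).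
    by rewrite [in RHS](bigD1 i) //=; ring.
  by move=> j _; exact: gradi2Z.
split=> [[_ N] i | sys].
  have [_ e ineq] := N i.
  by rewrite -constraintE e -LpiZ // -normi2Z.
split=> i; first exact: HiZ.
have [e ineq] := sys i.
split; first exact: aezeroZ (lt0r_neq0 (t_gt0 i)) (unz i).
  by rewrite constraintE e LpiZ.
by rewrite LpiZ // normi2Z.
Qed.

End scaled_constraints.

Theorem lemma2p1 (R : realType) (V : @R3 R -> R) (p : R) (k : nat)
    (r : nat -> R) (u : 'I_k.+1 -> @R3 R -> R)
    (g : 'I_k.+1 -> 'I_3 -> @R3 R -> R) :
  2 < p < 4 ->
  condV V ->
  Lambda k r ->
  (forall i : 'I_k.+1, Hi V k r i (u i) (g i)) ->
  (forall i : 'I_k.+1, ~ aezero (u i)) ->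
  (forall i : 'I_k.+1, integrable3 (fun x => `|u i x| `^ p)) ->
  (forall i : 'I_k.+1,
      (2 * Sq V p)^-1 <= (Lpi p k r i (u i)) `^ (2 / p) / normi2 V k r i (u i) (g i)) ->
  forall b : R, 0 < b < bstar p k (Sq V p) ->
  exists! t : 'I_k.+1 -> R,
    (forall i, 0 < t i) /\
    Nminus V k r p b (fun i x => t i * u i x) (fun i j x => t i * g i j x).
Proof.
move=> p_range [_ [_ [V0 [V0_gt0 V_ge]]]] _ uH unz _ ratio b /andP[b_gt0 b_lt].
have /andP[p_gt2 _] := p_range.
have V_ge0 x : 0 <= V x := le_trans (ltW V0_gt0) (V_ge x).
have S_gt0 : 0 < Sq V p.
  rewrite lt_def Sq_ge0 // andbT; apply: contraTneq b_lt => ->.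
  by rewrite -leNgt (le_trans (bstar0_le0 k p_gt2)) // ltW.
have two_div_p_neq0 : 2 / p != 0.
  by rewrite mulf_neq0 ?invr_neq0 ?gt_eqF // (lt_trans _ p_gt2).
have inv2S_gt0 : 0 < (2 * Sq V p)^-1 by rewrite invr_gt0 mulr_gt0.
have pos (i : 'I_k.+1) := quotient_gt0 inv2S_gt0
  (normi2_ge0 V k r i (u i) (g i) V_ge0) (Lpi_ge0 p k r i (u i)) two_div_p_neq0 (ratio i).
have a_gt0 i := (pos i).1; have d_gt0 i := (pos i).2.
have b_lt_bhat : b < bhat p k (Sq V p).
  by apply: lt_le_trans b_lt _; rewrite /bstar ge_min lexx orbT.
have [t [[t_gt0 t_sol] t_uniq]] := nehari_system_exists_unique p_gt2 (andP p_range).2 b_gt0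
  a_gt0 d_gt0 (fun i => gradi2_ge0 k r i (g i))
  (fun i => gradi2_le_normi2 V k r i (u i) (g i) V_ge0 (a_gt0 i))
  (fun i => mul_powR_ratio_le p_gt2 (a_gt0 i) (d_gt0 i) S_gt0 (ratio i))
  (bhat_bound k p_range S_gt0 b_gt0 b_lt_bhat).
exists t; split; first by split=> //; apply/Nminus_scaled_iff.
by move=> t' [t'_gt0 /Nminus_scaled_iff t'_sol]; apply: t_uniq; split=> //; exact: t'_sol.
Qed.
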